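(* Let $q\ge 2$ and let $\mathcal{S}$ be an SLP deriving a string $T$ with $|T|\ge q$, and let $\phi$ be a fingerprint function. Let $G$ be the graph constructed from $\mathcal{S}$ as follows. Start with an empty graph whose nodes and edges are keyed by fingerprints. For each rule $X_i=X_lX_r$ of $\mathcal{S}$ with $|X_i|\ge q$, in arbitrary order: let $r=r_{X_i}$; create the node labelled $\phi(r[0:q-2])$ if it does not exist; then for $j=1,\dots,|r|-q+1$, create the node labelled $\phi(r[j:j+q-2])$ if it does not exist, create an edge with label $r[j+q-2]$ from the node labelled $\phi(r[j-1:j+q-3])$ to the node labelled $\phi(r[j:j+q-2])$ (counter $0$) if no edge between these two nodes in this direction exists, and increment the counter of that edge by $occ(X_i)$. Then $G$ is connected.
   Context: For a string $s$, $s[i:j]$ is the substring from position $i$ to $j$ inclusive (0-indexed). An SLP is a set of rules $X_1,\dots,X_n$, each $X_i=a$ ($a$ a character) or $X_i=X_lX_r$ with $l,r<i$; $t_{X_i}$ is the string derived from $X_i$, $|X_i|=|t_{X_i}|$, $T=t_{X_n}$. $occ(X_i)$ is the number of occurrences of $X_i$ in the derivation tree of $X_n$. For $X_i=X_lX_r$ with $|X_i|\ge q$ the relevant substring is $r_{X_i}=t_{X_i}[\max(0,|X_l|-q+1):\min(|X_l|+q-2,|X_i|-1)]$. A fingerprint function maps strings to integers (Rabin–Karp: $\phi(s)=\sum_{k=1}^{|s|}s[k]b^k \bmod p$ for a prime $p$ and random $b\in\mathbb{Z}_p$). Connectedness is in the sense of the underlying undirected graph. *)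

From mathcomp Require Import all_boot all_algebra.
Set Implicit Arguments. Unset Strict Implicit. Unset Printing Implicit Defensive.

(* Straight-line programs: rule i (0-indexed) is either X_i = a or X_i = X_l X_r *)
Inductive rule (A : Type) := Term of A | Pair of nat & nat.
Arguments Term {A}. Arguments Pair {A}.

Section SLP.
Variable A : eqType.
Implicit Types (S : seq (rule A)) (s : seq A).

Definition ruleAt S i : rule A := nth (Pair 0 0) S i.

Definition slp_wf S : Prop :=
  forall i, i < size S ->
    match ruleAt S i with Term _ => True | Pair l r => l < i /\ r < i end.

Definition slp_exps S : seq (seq A) :=
  foldl (fun acc x => rcons acc (match x with
                                 | Term a => [:: a]
                                 | Pair l r => nth [::] acc l ++ nth [::] acc r end))
        [::] S.

Definition tX S i : seq A := nth [::] (slp_exps S) i.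

Definition slp_text S : seq A := tX S (size S).-1.

(* number of occurrences of node i in the derivation tree rooted at j
   (fuel k; fuel size S suffices for well-formed SLPs) *)
Fixpoint occ_aux S k j i : nat :=
  (j == i) + match k with
             | 0 => 0
             | k'.+1 => match ruleAt S j with
                        | Term _ => 0
                        | Pair l r => occ_aux S k' l i + occ_aux S k' r i end end.

Definition occ S i : nat := occ_aux S (size S) (size S).-1 i.

(* s[i:j], inclusive, 0-indexed *)
Definition sub s i j : seq A := take (j.+1 - i) (drop i s).

(* relevant substring r_{X_i} = t_{X_i}[max(0,|X_l|-q+1) : min(|X_l|+q-2, |X_i|-1)] *)
Definition relevant S q i : seq A :=
  match ruleAt S i with
  | Term _ => [::]
  | Pair l r =>
      sub (tX S i) ((size (tX S l)).+1 - q)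
          (minn (size (tX S l) + q - 2) (size (tX S i)).-1)
  end.

(* graph with nodes and directed edges keyed by fingerprints;
   an edge carries a label (the character r[j+q-2]) and a counter *)
Record fgraph := FGraph {
  gnode : int -> bool;
  gedge : int -> int -> option (option A * nat) }.

Definition empty_graph : fgraph := FGraph (fun _ => false) (fun _ _ => None).

Definition add_node (g : fgraph) (x : int) : fgraph :=
  FGraph (fun y => (y == x) || gnode g y) (gedge g).

Definition add_edge (g : fgraph) (u v : int) (lab : option A) (c : nat) : fgraph :=
  FGraph (gnode g)
    (fun x y => if (x == u) && (y == v) then
                  Some (match gedge g u v with
                        | Some (l, c0) => (l, c0 + c)
                        | None => (lab, 0 + c) end)
                else gedge g x y).

Definition process_rule S q (phi : seq A -> int) (g : fgraph) (i : nat) : fgraph :=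
  match ruleAt S i with
  | Term _ => g
  | Pair _ _ =>
      if q <= size (tX S i) then
        let r := relevant S q i in
        let g1 := add_node g (phi (sub r 0 (q - 2))) in
        foldl (fun g j =>
                 let u := phi (sub r j.-1 (j.-1 + (q - 2))) in
                 let v := phi (sub r j (j + (q - 2))) in
                 add_edge (add_node g v) u v (onth r (j + (q - 2))) (occ S i))
              g1 (iota 1 ((size r).+1 - q))
      else g
  end.

Definition build_graph S q (phi : seq A -> int) (ord : seq nat) : fgraph :=
  foldl (process_rule S q phi) empty_graph ord.

Definition uadj (g : fgraph) : rel int :=
  fun u v => isSome (gedge g u v) || isSome (gedge g v u).

Definition gconnected (g : fgraph) : Prop :=
  forall x y, gnode g x -> gnode g y ->
    exists p : seq int, path (uadj g) x p /\ last x p = y.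

End SLP.

From Pilot Require Import Defs.
From mathcomp Require Import all_boot all_algebra zify.
Set Implicit Arguments. Unset Strict Implicit. Unset Printing Implicit Defensive.

(* Every node of G is the fingerprint of a (q-1)-gram of T: it is a (q-1)-gram
   of some relevant substring r_{X_i}, which is a factor of t_{X_i}, which in
   turn is a factor of T because occ(X_i) > 0.  Conversely, any two consecutive
   (q-1)-grams of T are joined by an edge of G: by induction along the SLP, the
   q-gram of t_{X_i} = t_{X_l} t_{X_r} spanning them lies inside t_{X_l}, inside
   t_{X_r}, or straddles the boundary, in which case it lies inside r_{X_i} and
   processing X_i creates the edge.  So every node is linked to the first
   (q-1)-gram of T. *)

Section Windows.
Variable T : Type.
Implicit Types s u v w : seq T.

Definition window k s a : seq T := take k (drop a s).

Lemma window_catl k s s' a : a + k <= size s -> window k (s ++ s') a = window k s a.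
Proof.
move=> hs; rewrite /window !take_drop addnC take_cat.
case: ltnP => // h; have -> : a + k = size s by apply/eqP; rewrite eqn_leq hs.
by rewrite subnn take0 cats0 take_size.
Qed.

Lemma window_catr k s s' a : size s <= a ->
  window k (s ++ s') a = window k s' (a - size s).
Proof. by move=> hs; rewrite /window drop_cat ltnNge hs. Qed.

Lemma window_cat_mid k u w v c : c + k <= size w ->
  window k (u ++ w ++ v) (size u + c) = window k w c.
Proof. by move=> hw; rewrite window_catr ?leq_addr // addKn window_catl. Qed.

Lemma window_window k K s st c : c + k <= K ->
  window k (window K s st) c = window k s (st + c).
Proof.
move=> hK; rewrite /window take_drop take_takel; last by rewrite addnC.
by rewrite -take_drop drop_drop addnC.
Qed.

End Windows.

Section Foldl.
Variables (R : Type) (I : eqType) (F : R -> I -> R) (P : R -> Prop).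

Lemma foldl_ind_in (s : seq I) g :
  (forall g x, x \in s -> P g -> P (F g x)) -> P g -> P (foldl F g s).
Proof.
elim: s g => [|x s IHs] g //= hF hg; apply: IHs => [g' y sy|]; apply: hF => //.
  by rewrite in_cons sy orbT.
by rewrite mem_head.
Qed.

Lemma foldl_stable_mem x (s : seq I) g :
  (forall g y, P g -> P (F g y)) -> (forall g, P (F g x)) -> x \in s ->
  P (foldl F g s).
Proof.
move=> stableP xP; elim: s g => [|y s IHs] g //=; rewrite in_cons => /predU1P[<-|/IHs//].
by apply: foldl_ind_in => [g' z _|]; [apply: stableP | apply: xP].
Qed.

End Foldl.

Section StraightLinePrograms.
Variable A : eqType.
Implicit Types (S : seq (rule A)) (acc : seq (seq A)).

Definition exps_step acc (x : rule A) : seq (seq A) :=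
  rcons acc (match x with
             | Term a => [:: a]
             | Pair l r => nth [::] acc l ++ nth [::] acc r end).

Lemma slp_exps_cat S1 S2 : slp_exps (S1 ++ S2) = foldl exps_step (slp_exps S1) S2.
Proof. exact: foldl_cat. Qed.

Lemma size_foldl_exps acc S : size (foldl exps_step acc S) = size acc + size S.
Proof. by elim: S acc => [|x S IHS] acc /=; rewrite ?addn0 // IHS size_rcons addSnnS. Qed.

Lemma size_slp_exps S : size (slp_exps S) = size S.
Proof. exact: size_foldl_exps. Qed.

Lemma nth_foldl_exps acc S j : j < size acc ->
  nth [::] (foldl exps_step acc S) j = nth [::] acc j.
Proof.
elim: S acc => [|x S IHS] acc //= hj.
by rewrite IHS ?nth_rcons ?hj // size_rcons ltnS ltnW.
Qed.

Lemma tX_cat S1 S2 j : j < size S1 -> tX (S1 ++ S2) j = tX S1 j.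
Proof. by move=> hj; rewrite /tX slp_exps_cat nth_foldl_exps ?size_slp_exps. Qed.

Lemma tX_take S i j : i <= size S -> j < i -> tX (take i S) j = tX S j.
Proof.
by move=> hi hj; rewrite -{2}(cat_take_drop i S) tX_cat // size_takel.
Qed.

Lemma tX_rcons S x j : j = size S ->
  tX (rcons S x) j = match x with
                     | Term a => [:: a]
                     | Pair l r => tX S l ++ tX S r end.
Proof.
move=> ->; rewrite /tX -cats1 slp_exps_cat /= nth_rcons size_slp_exps ltnn eqxx.
by case: x.
Qed.

Lemma tX_rule S i : i < size S ->
  tX S i = match ruleAt S i with
           | Term a => [:: a]
           | Pair l r => tX (take i S) l ++ tX (take i S) r end.
Proof.
move=> hi; have sizeSi : size (take i S) = i by rewrite size_takel // ltnW.
have splitS : S = rcons (take i S) (ruleAt S i) ++ drop i.+1 S.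
  by rewrite -cats1 -catA cat1s /ruleAt -drop_nth // cat_take_drop.
by rewrite {1}splitS tX_cat ?size_rcons ?sizeSi // tX_rcons.
Qed.

Lemma tX_Pair S i l r : slp_wf S -> i < size S -> ruleAt S i = Pair l r ->
  tX S i = tX S l ++ tX S r.
Proof.
move=> wfS hi Ei; have := wfS i hi; rewrite Ei => -[hl hr].
by rewrite tX_rule // Ei !tX_take // ltnW.
Qed.

Lemma tX_Term S i a : i < size S -> ruleAt S i = Term a -> tX S i = [:: a].
Proof. by move=> hi Ei; rewrite tX_rule // Ei. Qed.

Lemma occ_aux_infix S k j i : slp_wf S -> j < size S -> 0 < occ_aux S k j i ->
  infix (tX S i) (tX S j).
Proof.
move=> wfS; elim: k j => [|k IHk] j hj /=.
  by case: eqVneq => [->|_]; rewrite ?infix_refl.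
case: eqVneq => [->|_]; first by rewrite infix_refl.
have := wfS j hj; case Ej: (ruleAt S j) => [//|l r] [hl hr].
rewrite (tX_Pair wfS hj Ej) add0n addn_gt0 => /orP[occl|occr].
  exact: infix_trans (IHk l (ltn_trans hl hj) occl) (prefix_infix _ _).
exact: infix_trans (IHk r (ltn_trans hr hj) occr) (suffix_infix _ _).
Qed.

Lemma occ_infix_text S i : slp_wf S -> 0 < occ S i -> infix (tX S i) (slp_text S).
Proof.
rewrite /occ /slp_text; case: (posnP (size S)) => [-> _|Spos wfS].
  by case: i => [|i]; rewrite ?infix_refl.
by apply: occ_aux_infix; rewrite // prednK.
Qed.

End StraightLinePrograms.

Section Linked.
Variables (A : eqType) (g : Defs.fgraph A).

Definition linked x y := exists p, path (uadj g) x p /\ last x p = y.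

Lemma uadjC : symmetric (uadj g).
Proof. by move=> x y; rewrite /uadj orbC. Qed.

Lemma linked_refl x : linked x x.
Proof. by exists [::]. Qed.

Lemma uadj_linked x y : uadj g x y -> linked x y.
Proof. by exists [:: y]; rewrite /= andbT. Qed.

Lemma linked_trans x y z : linked x y -> linked y z -> linked x z.
Proof.
move=> [p [xp <-]] [p' [yp' <-]]; exists (p ++ p').
by rewrite cat_path last_cat xp yp'.
Qed.

Lemma linked_sym x y : linked x y -> linked y x.
Proof.
move=> [p [xp <-]]; exists (rev (belast x p)); split.
  by rewrite rev_path (eq_path (e' := uadj g)) // => u v; rewrite uadjC.
by case: p {xp} => //= z p; rewrite rev_cons last_rcons.
Qed.

End Linked.

Section QGramGraph.
Variables (A : eqType) (q : nat) (S : seq (rule A)) (phi : seq A -> int).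
Variable ord : seq nat.
Hypothesis q_ge2 : 2 <= q.
Hypothesis S_wf : slp_wf S.
Hypothesis ord_perm : perm_eq ord (iota 0 (size S)).

Local Notation gram := (window (q - 1)).
Local Notation G := (build_graph S q phi ord).

Lemma mem_ord i : (i \in ord) = (i < size S).
Proof. by rewrite (perm_mem ord_perm) mem_iota. Qed.

Definition text_gram (x : int) : Prop :=
  exists2 a, a + (q - 1) <= size (slp_text S) & x = phi (gram (slp_text S) a).

Lemma sub_gram (s : seq A) a : sub s a (a + (q - 2)) = gram s a.
Proof. by rewrite /sub /window; congr take; lia. Qed.

Lemma relevant_gram i l r c : ruleAt S i = Pair l r ->
  c + (q - 1) <= size (relevant S q i) ->
  gram (relevant S q i) c = gram (tX S i) ((size (tX S l)).+1 - q + c).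
Proof.
rewrite /relevant => -> hc; apply: window_window.
by apply: leq_trans hc _; rewrite size_take_min geq_minl.
Qed.

Lemma size_relevant i l r : ruleAt S i = Pair l r -> q <= size (tX S i) ->
  size (relevant S q i)
  = minn (size (tX S l) + q - 1) (size (tX S i)) - ((size (tX S l)).+1 - q).
Proof. by rewrite /relevant => -> hqi; rewrite /sub size_take_min size_drop; lia. Qed.

Lemma size_tX_Pair i l r : i < size S -> ruleAt S i = Pair l r ->
  size (tX S i) = size (tX S l) + size (tX S r).
Proof. by move=> hi Ei; rewrite (tX_Pair S_wf hi Ei) size_cat. Qed.

Lemma gram_text_gram i c : i < size S -> 0 < occ S i ->
  c + (q - 1) <= size (tX S i) -> text_gram (phi (gram (tX S i) c)).
Proof.
move=> hi occi hc; have /infixP[u [v textE]] := occ_infix_text S_wf occi.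
exists (size u + c); first by rewrite textE !size_cat; lia.
by rewrite textE window_cat_mid.
Qed.

Lemma process_rule_text_grams g i : i < size S -> 0 < occ S i ->
  (forall x, gnode g x -> text_gram x) ->
  forall x, gnode (process_rule S q phi g i) x -> text_gram x.
Proof.
move=> hi occi gP; rewrite /process_rule.
case Ei: (ruleAt S i) => [//|l r]; case: ifP => // hqi.
have relP c : c + (q - 1) <= size (relevant S q i) ->
    text_gram (phi (gram (relevant S q i) c)).
  move=> hc; rewrite (relevant_gram Ei hc); apply: gram_text_gram => //.
  by move: hc; rewrite (size_relevant Ei hqi); lia.
apply: (foldl_ind_in (P := fun g => forall x, gnode g x -> text_gram x))
  => [g' j + g'P x /= /orP[/eqP ->|/g'P//]|x /= /orP[/eqP ->|/gP//]].
  by rewrite mem_iota sub_gram => hj; apply: relP; lia.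
have := size_tX_Pair hi Ei; rewrite -[q - 2]add0n sub_gram => hsz.
by apply: relP; rewrite (size_relevant Ei hqi); lia.
Qed.

Lemma process_rule_edge g i u v :
  isSome (gedge g u v) -> isSome (gedge (process_rule S q phi g i) u v).
Proof.
rewrite /process_rule => guv; case: (ruleAt S i) => // l r; case: ifP => // _.
apply: (foldl_ind_in (P := fun g => isSome (gedge g u v))) => //= g' j _ g'uv.
by case: ifP.
Qed.

Lemma process_rule_crossing_edge g i l r a : i < size S -> ruleAt S i = Pair l r ->
  a < size (tX S l) < a + q -> a + q <= size (tX S i) ->
  isSome (gedge (process_rule S q phi g i)
                (phi (gram (tX S i) a)) (phi (gram (tX S i) a.+1))).
Proof.
move=> hi Ei /andP[al la] hai; set u := phi _; set v := phi _.
rewrite /process_rule Ei ifT; last lia.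
set st := (size (tX S l)).+1 - q.
have hsize := size_relevant Ei (leq_trans (leq_addl a q) hai).
have hsz := size_tX_Pair hi Ei.
apply: (foldl_stable_mem (P := fun g => isSome (gedge g u v)) (x := (a - st).+1)).
- by move=> g' j /=; case: ifP.
- move=> g' /=; rewrite !sub_gram !(relevant_gram Ei) ?hsize; try lia.
  rewrite addnS; have -> : st + (a - st) = a by lia.
  by rewrite !eqxx.
- by rewrite mem_iota hsize; lia.
Qed.

Lemma build_graph_text_grams x : (forall i, i < size S -> 0 < occ S i) ->
  gnode G x -> text_gram x.
Proof.
move=> occS; move: x.
apply: (foldl_ind_in (P := fun g => forall x, gnode g x -> text_gram x)) => // g i.
by rewrite mem_ord => hi; apply: process_rule_text_grams (occS i hi).
Qed.

Lemma build_graph_rule_edge i u v : i < size S ->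
  (forall g, isSome (gedge (process_rule S q phi g i) u v)) -> isSome (gedge G u v).
Proof.
move=> hi ruleE; apply: (foldl_stable_mem (P := fun g => isSome (gedge g u v)) (x := i)).
- by move=> g j; apply: process_rule_edge.
- exact: ruleE.
- by rewrite mem_ord.
Qed.

Lemma build_graph_edge i a : i < size S -> a + q <= size (tX S i) ->
  isSome (gedge G (phi (gram (tX S i) a)) (phi (gram (tX S i) a.+1))).
Proof.
elim/ltn_ind: i a => i IHi a hi hai.
case Ei: (ruleAt S i) => [z|l r].
  by move: hai; rewrite (tX_Term hi Ei) /=; lia.
have := S_wf hi; rewrite Ei => -[hl hr].
have hsz := size_tX_Pair hi Ei.
have [inl|crossl] := leqP (a + q) (size (tX S l)).
  rewrite (tX_Pair S_wf hi Ei) !window_catl; try lia.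
  exact: IHi hl _ (ltn_trans hl hi) inl.
have [inr|crossr] := leqP (size (tX S l)) a.
  rewrite (tX_Pair S_wf hi Ei) !window_catr ?subSn //; try lia.
  by apply: IHi hr _ (ltn_trans hr hi) _; lia.
apply: (build_graph_rule_edge hi) => g.
by apply: (process_rule_crossing_edge g hi Ei); rewrite ?crossr.
Qed.

Lemma text_grams_linked a : 0 < size S -> a + (q - 1) <= size (slp_text S) ->
  linked G (phi (gram (slp_text S) 0)) (phi (gram (slp_text S) a)).
Proof.
move=> Spos; elim: a => [_|a IHa ha]; first exact: linked_refl.
apply: linked_trans (IHa _) (uadj_linked _); first lia.
rewrite /uadj (build_graph_edge (i := (size S).-1)) ?prednK //.
by rewrite -/(slp_text S); lia.
Qed.

Lemma build_graph_connected :
  (forall i, i < size S -> 0 < occ S i) -> q <= size (slp_text S) -> gconnected G.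
Proof.
move=> occS qT x y.
move=> /(build_graph_text_grams occS)[a ha ->] /(build_graph_text_grams occS)[b hb ->].
have Spos : 0 < size S.
  by case: (posnP (size S)) qT => // /size0nil ->; rewrite /slp_text /tX /=; lia.
exact: linked_trans (linked_sym (text_grams_linked Spos ha)) (text_grams_linked Spos hb).
Qed.

End QGramGraph.

Theorem lemma7 (A : eqType) (q : nat) (S : seq (rule A)) (phi : seq A -> int)
    (ord : seq nat) :
  2 <= q ->
  slp_wf S ->
  (forall i, i < size S -> 0 < occ S i) ->
  q <= size (slp_text S) ->
  perm_eq ord (iota 0 (size S)) ->
  gconnected (build_graph S q phi ord).
Proof. by move=> q_ge2 S_wf occS qT ord_perm; apply: build_graph_connected. Qed.
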